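(* Let $\mathcal{H}$ be a complex separable Hilbert space, let $\mathcal{A}=(A_n)_{n\ge 0}$ be a sequence of positive invertible bounded operators on $\mathcal{H}$ with $\sup_n\|A_n\|<\infty$, and let $W_{\mathcal A}$ be the associated operator-valued weighted shift on $\ell^2(\mathcal H)$. Let $k\ge 1$ be an integer. Then $W_{\mathcal A}$ is $k$-hyponormal if and only if $W_{\mathcal A}$ is $k_E$-hyponormal.
   Context: $\ell^2(\mathcal H)=\{(x_n)_{n\ge0}: x_n\in\mathcal H,\ \sum_n\|x_n\|^2<\infty\}$ with inner product $\langle x,y\rangle=\sum_n\langle x_n,y_n\rangle$. The operator-valued weighted shift is $W_{\mathcal A}(x_0,x_1,x_2,\dots)=(0,A_0x_0,A_1x_1,\dots)$. A bounded operator $T$ is $k$-hyponormal if the operator matrix $(T^{*j}T^{i})_{0\le i,j\le k}$ is positive (equivalently $([T^{*j},T^i])_{1\le i,j\le k}\ge0$, where $[X,Y]=XY-YX$), and $k_E$-hyponormal (Embry $k$-hyponormal) if the operator matrix $(T^{*(i+j)}T^{i+j})_{0\le i,j\le k}$ is positive. *)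

From HB Require Import structures.
From mathcomp Require Import all_boot all_order all_algebra.
From mathcomp Require Import complex.
From mathcomp Require Import all_classical all_reals all_analysis.
Set Implicit Arguments. Unset Strict Implicit. Unset Printing Implicit Defensive.
Import Order.TTheory GRing.Theory Num.Theory.
Import numFieldNormedType.Exports.
Local Open Scope ring_scope.
Local Open Scope complex_scope.

Section Hilbert.
Variables (R : realType) (H : lmodType R[i]) (ip : H -> H -> R[i]).

Definition hnorm (x : H) : R := Num.sqrt (complex.Re (ip x x)).

Definition is_inner_product : Prop :=
  [/\ (forall (a : R[i]) x y z, ip (a *: x + y) z = a * ip x z + ip y z),
      (forall x y, ip y x = conjc (ip x y)),
      (forall x, 0 <= ip x x) &
      (forall x, ip x x = 0 -> x = 0)].

Definition hcauchy (u : nat -> H) : Prop :=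
  forall e : R, 0 < e -> exists N, forall m n, (N <= m)%N -> (N <= n)%N ->
    hnorm (u m - u n) < e.

Definition hconverges (u : nat -> H) (l : H) : Prop :=
  forall e : R, 0 < e -> exists N, forall n, (N <= n)%N -> hnorm (u n - l) < e.

Definition complex_separable_hilbert : Prop :=
  [/\ is_inner_product,
      (forall u, hcauchy u -> exists l, hconverges u l) &
      (exists d : nat -> H, forall x (e : R), 0 < e -> exists n, hnorm (x - d n) < e)].

Definition bounded_op (T : H -> H) : Prop :=
  exists M : R, forall x, hnorm (T x) <= M * hnorm x.

Definition positive_op (T : H -> H) : Prop := forall x, 0 <= ip (T x) x.

Definition invertible_op (T : H -> H) : Prop :=
  exists B : {linear H -> H}, bounded_op B /\ cancel T B /\ cancel B T.

Definition l2 (x : nat -> H) : Prop :=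
  cvgn (series (fun n => hnorm (x n) ^+ 2) : R^nat).

Definition l2ip (x y : nat -> H) : R[i] :=
  Complex (limn (series (fun n => complex.Re (ip (x n) (y n))) : R^nat))
          (limn (series (fun n => complex.Im (ip (x n) (y n))) : R^nat)).

Definition l2_adjoint (T S : (nat -> H) -> (nat -> H)) : Prop :=
  (forall x, l2 x -> l2 (S x)) /\
  (forall x y, l2 x -> l2 y -> l2ip (T x) y = l2ip x (S y)).

Definition op_matrix_pos (k : nat)
    (M : 'I_k.+1 -> 'I_k.+1 -> (nat -> H) -> (nat -> H)) : Prop :=
  forall x : 'I_k.+1 -> nat -> H, (forall i, l2 (x i)) ->
    0 <= \sum_(i < k.+1) \sum_(j < k.+1) l2ip (M i j (x j)) (x i).

Definition k_hyponormal (k : nat) (T : (nat -> H) -> (nat -> H)) : Prop :=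
  forall S, l2_adjoint T S ->
    @op_matrix_pos k (fun i j => fun x => iter j S (iter i T x)).

Definition kE_hyponormal (k : nat) (T : (nat -> H) -> (nat -> H)) : Prop :=
  forall S, l2_adjoint T S ->
    @op_matrix_pos k (fun i j => fun x => iter (i + j) S (iter (i + j) T x)).

End Hilbert.

Definition wshift (R : realType) (H : lmodType R[i]) (A : nat -> H -> H)
    (x : nat -> H) : nat -> H :=
  fun n => match n with 0%N => 0 | m.+1 => A m (x m) end.

From HB Require Import structures.
From mathcomp Require Import all_boot all_order all_algebra.
From mathcomp Require Import complex.
From mathcomp Require Import all_classical all_reals all_analysis.
From mathcomp Require Import zify lra.
Import Order.TTheory GRing.Theory Num.Theory.
Import numFieldNormedType.Exports.
Local Open Scope ring_scope.
Local Open Scope complex_scope.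
Set Implicit Arguments. Unset Strict Implicit. Unset Printing Implicit Defensive.

(* Both quadratic forms split along the grading of l^2(H).  Write P n s for the
   weight product A_(n+s-1) ... A_n.  Since (W^s x)(m + s) = P m s (x m),
   <W^(i+j) x_j, W^(i+j) x_i> = sum_n <P n (i+j) x_j(n), P n (i+j) x_i(n)>, so
   Embry k-hyponormality amounts to the positivity, at every level n, of the
   finite forms E_n(e) = sum_(i,j) <P n (i+j) e_j, P n (i+j) e_i>.  In the same
   way <W^i x_j, W^j x_i> regroups level by level into the forms
   H_n(c) = sum_(i,j) <P (n+j) i c_j, P (n+i) j c_i>, truncated at the lowest
   levels, and testing k-hyponormality on vectors supported on one level shows
   that it forces H_n >= 0.  As P (n+j) i (P n j y) = P n (i+j) y, we have
   H_n(P n j e_j) = E_n(e); every A_n being onto, every c has this shape, and a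
   truncated H-form is an E-form at a higher level.  Only the inner product, the
   uniform bound on the A_n (so that W acts on l^2(H)) and the surjectivity of
   the A_n are used. *)

Section ComplexSeries.
Variable R : realType.
Implicit Types (u : R ^nat) (a b : nat -> R[i]).

(* No convergence is needed: [lim] picks a limit with [get], and shifting a
   sequence does not change its set of limits. *)
Lemma limn_shiftn u c : limn (fun n => u (n + c)%N) = limn u.
Proof. by rewrite /lim /lim_in; congr get; apply: funext => l; rewrite (cvg_shiftn c u). Qed.

Lemma is_cvgn_shiftn u c : cvgn (fun n => u (n + c)%N) = cvgn u.
Proof. by rewrite limn_shiftn (cvg_shiftn c u). Qed.

Lemma series_shiftn (V : zmodType) (u v : V ^nat) c :
  (forall m, u m = v (m + c)%N) -> (forall p, (p < c)%N -> v p = 0) ->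
  series u = (fun n => series v (n + c)%N).
Proof.
move=> uv v0; apply: funext => n; rewrite series_addn.
have -> : series v c = 0 by rewrite seriesEnat /= big_nat big1 // => p /v0.
by rewrite add0r seriesEnat /= -{1}(add0n c) big_addn addnK; apply: eq_bigr.
Qed.

Lemma cvg_series_delta u N :
  (forall m, m != N -> u m = 0) -> (series u @ \oo --> u N)%classic.
Proof.
move=> u0; apply: cvg_near_cst; near=> n.
have Nn : (N < n)%N by near: n; exact: nbhs_infty_gt.
rewrite seriesEord /= (bigD1 (Ordinal Nn)) //=.
by rewrite big1 ?addr0 // => i iN; apply: u0; apply: contra_neq iN => iN; exact: val_inj.
Unshelve. all: by end_near. Qed.

Lemma cvg_series_sum (I : Type) (r : seq I) (F : I -> R ^nat) :
  (forall i, cvgn (series (F i))) ->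
  (series (fun n => \sum_(i <- r) F i n) @ \oo -->
   \sum_(i <- r) limn (series (F i)))%classic.
Proof.
move=> cF; have -> : series (fun n => \sum_(i <- r) F i n) =
    (fun n => \sum_(i <- r) series (F i) n).
  by apply: funext => n; rewrite /series /= exchange_big.
by apply: cvg_big => //; exact: add_continuous.
Qed.

Definition csummable a :=
  cvgn (series (fun n => complex.Re (a n))) /\
  cvgn (series (fun n => complex.Im (a n))).

Definition csum a : R[i] :=
  Complex (limn (series (fun n => complex.Re (a n))))
          (limn (series (fun n => complex.Im (a n)))).

Lemma csum_series_shiftn a b c :
  (forall m, a m = b (m + c)%N) -> (forall p, (p < c)%N -> b p = 0) ->
  series (fun n => complex.Re (a n)) =
    (fun n => series (fun n => complex.Re (b n)) (n + c)%N) /\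
  series (fun n => complex.Im (a n)) =
    (fun n => series (fun n => complex.Im (b n)) (n + c)%N).
Proof.
move=> ab b0; split; apply: series_shiftn => [m|p /b0 ->]; by rewrite ?ab.
Qed.

Lemma csummable_shiftn a b c :
  (forall m, a m = b (m + c)%N) -> (forall p, (p < c)%N -> b p = 0) ->
  csummable a <-> csummable b.
Proof.
move=> ab b0; rewrite /csummable.
by have [-> ->] := csum_series_shiftn ab b0; rewrite !is_cvgn_shiftn.
Qed.

Lemma csum_shiftn a b c :
  (forall m, a m = b (m + c)%N) -> (forall p, (p < c)%N -> b p = 0) ->
  csum a = csum b.
Proof.
move=> ab b0; rewrite /csum.
by have [-> ->] := csum_series_shiftn ab b0; rewrite !limn_shiftn.
Qed.

Lemma csum_delta a N : (forall m, m != N -> a m = 0) -> csummable a /\ csum a = a N.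
Proof.
move=> a0.
have lRe := @cvg_series_delta (fun n => complex.Re (a n)) N (fun m mN => congr1 _ (a0 m mN)).
have lIm := @cvg_series_delta (fun n => complex.Im (a n)) N (fun m mN => congr1 _ (a0 m mN)).
split; first by split; [exact: cvgP lRe | exact: cvgP lIm].
by rewrite /csum (cvg_lim _ lRe) // (cvg_lim _ lIm) //; case: (a N).
Qed.

Lemma csum_sum (I : Type) (r : seq I) (F : I -> nat -> R[i]) :
  (forall i, csummable (F i)) ->
  csummable (fun n => \sum_(i <- r) F i n) /\
  csum (fun n => \sum_(i <- r) F i n) = \sum_(i <- r) csum (F i).
Proof.
move=> cF.
have eRe : (fun n => complex.Re (\sum_(i <- r) F i n)) =
    (fun n => \sum_(i <- r) complex.Re (F i n)) by apply: funext => n; rewrite raddf_sum.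
have eIm : (fun n => complex.Im (\sum_(i <- r) F i n)) =
    (fun n => \sum_(i <- r) complex.Im (F i n)) by apply: funext => n; rewrite raddf_sum.
have lRe := cvg_series_sum (r := r) (fun i => (cF i).1).
have lIm := cvg_series_sum (r := r) (fun i => (cF i).2).
rewrite /csummable /csum eRe eIm.
split; first by split; [exact: cvgP lRe | exact: cvgP lIm].
rewrite (cvg_lim _ lRe) // (cvg_lim _ lIm) //.
by apply/eqP; rewrite eq_complex /=; apply/andP; split; rewrite raddf_sum.
Qed.

Lemma csum_ge0 a : (forall n, 0 <= a n) -> csummable a -> 0 <= csum a.
Proof.
move=> a0 [cRe _].
have Im0 : (fun n => complex.Im (a n)) = (fun=> 0).
  by apply: funext => n; have := a0 n; rewrite lecE => /andP[/eqP ->].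
rewrite lecE /= Im0; apply/andP; split.
  by rewrite seriesEord /=; under eq_fun do rewrite big1 //; rewrite lim_cst.
apply: limr_ge cRe _; apply: nearW => n; apply: sumr_ge0 => i _.
by have := a0 i; rewrite lecE => /andP[].
Qed.

Lemma csum_conj a : csummable a ->
  csummable (fun n => (a n)^*) /\ csum (fun n => (a n)^*) = (csum a)^*.
Proof.
move=> [cRe cIm].
have eRe : (fun n => complex.Re (a n)^*) = (fun n => complex.Re (a n)).
  by apply: funext => n; case: (a n).
have eIm : (fun n => complex.Im (a n)^*) = - (fun n => complex.Im (a n)).
  by rewrite opprfctE; apply: funext => n; case: (a n).
by rewrite /csummable /csum eRe eIm is_cvg_seriesN lim_seriesN.
Qed.

Lemma csum_double_ge0 (I : finType) (F : I -> I -> nat -> R[i]) :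
  (forall i j, csummable (F i j)) -> (forall n, 0 <= \sum_i \sum_j F i j n) ->
  0 <= \sum_i \sum_j csum (F i j).
Proof.
move=> cF F0.
have inner i := csum_sum (index_enum I) (cF i).
under eq_bigr do rewrite -(inner _).2.
have [outer <-] := csum_sum (index_enum I) (fun i => (inner i).1).
exact: csum_ge0 F0 outer.
Qed.

End ComplexSeries.

Section InnerProduct.
Variables (R : realType) (H : lmodType R[i]) (ip : H -> H -> R[i]).
Hypothesis hip : is_inner_product ip.

Lemma ipDl x y z : ip (x + y) z = ip x z + ip y z.
Proof. by case: hip => lin _ _ _; have := lin 1 x y z; rewrite scale1r mul1r. Qed.

Lemma ip0l z : ip 0 z = 0.
Proof.
by case: hip => lin _ _ _; have := lin (-1) z z z; rewrite scaleN1r addNr mulN1r addNr.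
Qed.

Lemma ipZl a x z : ip (a *: x) z = a * ip x z.
Proof. by case: hip => lin _ _ _; rewrite -[a *: x]addr0 lin ip0l addr0. Qed.

Lemma ipNl x z : ip (- x) z = - ip x z.
Proof. by rewrite -scaleN1r ipZl mulN1r. Qed.

Lemma ipC x y : ip y x = (ip x y)^*.
Proof. by case: hip => _ sym _ _; apply: sym. Qed.

Lemma ipDr z x y : ip z (x + y) = ip z x + ip z y.
Proof.
rewrite ipC ipDl (ipC x z) (ipC y z).
by case: (ip x z) => ? ?; case: (ip y z) => ? ? /=; rewrite opprD.
Qed.

Lemma ip0r z : ip z 0 = 0.
Proof. by rewrite ipC ip0l conjc0. Qed.

Lemma ipNr z x : ip z (- x) = - ip z x.
Proof. by rewrite ipC ipNl (ipC x z); case: (ip x z). Qed.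

Lemma ip_self_ge0 x : complex.Im (ip x x) = 0 /\ 0 <= complex.Re (ip x x).
Proof. by case: hip => _ _ pos _; move: (pos x); rewrite lecE => /andP[/eqP -> ->]. Qed.

Lemma hnorm_sqr x : hnorm ip x ^+ 2 = complex.Re (ip x x).
Proof. by rewrite /hnorm sqr_sqrtr //; case: (ip_self_ge0 x). Qed.

Lemma hnorm0 : hnorm ip 0 = 0.
Proof. by rewrite /hnorm ip0l sqrtr0. Qed.

Lemma Re_ip_le x y :
  `|complex.Re (ip x y)| <= complex.Re (ip x x) + complex.Re (ip y y).
Proof.
have [_ pD] := ip_self_ge0 (x + y); have [_ pB] := ip_self_ge0 (x - y).
have [_ px] := ip_self_ge0 x; have [_ py] := ip_self_ge0 y.
have ReC : complex.Re (ip y x) = complex.Re (ip x y) by rewrite ipC; case: (ip x y).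
rewrite !ipDl !ipDr !ipNl !ipNr !raddfD !raddfN /= opprK ReC in pD pB.
rewrite ler_norml; apply/andP; split; lra.
Qed.

(* [Im <x, y> = Re <-i x, y>], and [-i x] has the same norm as [x]. *)
Lemma Im_ip_le x y :
  `|complex.Im (ip x y)| <= complex.Re (ip x x) + complex.Re (ip y y).
Proof.
pose c : R[i] := 0 +i* (-1).
have -> : complex.Im (ip x y) = complex.Re (ip (c *: x) y).
  by rewrite ipZl /c; case: (ip x y) => a b /=; lra.
have <- : complex.Re (ip (c *: x) (c *: x)) = complex.Re (ip x x).
  rewrite ipZl (ipC (c *: x)) ipZl.
  by have [] := ip_self_ge0 x; rewrite /c; case: (ip x x) => a b /= -> _; lra.
exact: Re_ip_le.
Qed.

Lemma csummable_ip x y : l2 ip x -> l2 ip y -> csummable (fun n => ip (x n) (y n)).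
Proof.
move=> hx hy.
have dom :
    cvgn (series (fun n => complex.Re (ip (x n) (x n)) + complex.Re (ip (y n) (y n)))).
  by under eq_fun do rewrite -!hnorm_sqr; exact: is_cvg_seriesD.
have dom0 n : 0 <= complex.Re (ip (x n) (x n)) + complex.Re (ip (y n) (y n)).
  by apply: addr_ge0; [case: (ip_self_ge0 (x n)) | case: (ip_self_ge0 (y n))].
split; apply: normed_cvg.
- exact: series_le_cvg (fun n => normr_ge0 _) dom0 (fun n => Re_ip_le _ _) dom.
- exact: series_le_cvg (fun n => normr_ge0 _) dom0 (fun n => Im_ip_le _ _) dom.
Qed.

Lemma l2ipE x y : l2ip ip x y = csum (fun n => ip (x n) (y n)).
Proof. by []. Qed.

Lemma l2ipC x y : l2 ip x -> l2 ip y -> l2ip ip y x = (l2ip ip x y)^*.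
Proof.
move=> hx hy; have [_ <-] := csum_conj (csummable_ip hx hy).
by congr csum; apply: funext => n; rewrite -ipC.
Qed.

Definition hdelta (N : nat) (y : H) : nat -> H := fun m => if m == N then y else 0.

Lemma l2_hdelta N y : l2 ip (hdelta N y).
Proof.
apply: (cvgP _ (cvg_series_delta (N := N) _)) => m mN.
by rewrite /hdelta (negbTE mN) hnorm0 expr0n.
Qed.

Lemma l2ip_hdelta N a b : l2ip ip (hdelta N a) (hdelta N b) = ip a b.
Proof.
have off m : m != N -> ip (hdelta N a m) (hdelta N b m) = 0.
  by move=> mN; rewrite /hdelta (negbTE mN) ip0l.
by rewrite l2ipE; have [_ ->] := csum_delta off; rewrite /hdelta eqxx.
Qed.

End InnerProduct.

Section WeightedShift.
Variables (R : realType) (H : lmodType R[i]) (A : nat -> {linear H -> H}).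
Local Notation W := (wshift (fun n => A n)).

Fixpoint wprod (n i : nat) (y : H) : H :=
  if i is i'.+1 then A (n + i') (wprod n i' y) else y.

Lemma wprod0 n i : wprod n i 0 = 0.
Proof. by elim: i => //= i ->; rewrite linear0. Qed.

Lemma wprodD n i j y : wprod (n + i) j (wprod n i y) = wprod n (i + j) y.
Proof. by elim: j => [|j IH]; rewrite ?addn0 // addnS /= IH addnA. Qed.

Lemma wprod_surj : (forall n z, exists y, A n y = z) ->
  forall n i z, exists y, wprod n i y = z.
Proof.
move=> surjA n; elim=> [|i IH] z; first by exists z.
have [w <-] := surjA (n + i)%N z; have [y <-] := IH w.
by exists y.
Qed.

Lemma iter_wshift i x m :
  iter i W x m = if (i <= m)%N then wprod (m - i) i (x (m - i)%N) else 0.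
Proof.
elim: i m => [|i IH] [|m] //=; rewrite ?subn0 // IH ltnS.
case: leqP => im; last by rewrite linear0.
by rewrite subSS subnK.
Qed.

Lemma iter_wshift_hdelta i N y : iter i W (hdelta N y) = hdelta (N + i) (wprod N i y).
Proof.
apply: funext => m; rewrite iter_wshift /hdelta.
case: (leqP i m) => im; last by case: eqP => // mE; lia.
have -> : (m == N + i)%N = (m - i == N)%N by apply/idP/idP => /eqP mE; apply/eqP; lia.
by case: eqP => [->|_]; rewrite ?wprod0.
Qed.

Variables (ip : H -> H -> R[i]) (M : R).
Hypothesis hip : is_inner_product ip.
Hypothesis hM : forall n x, hnorm ip (A n x) <= M * hnorm ip x.

Lemma l2_wshift x : l2 ip x -> l2 ip (W x).
Proof.
move=> hx.
have Wx0 p : (p < 1)%N -> hnorm ip (W x p) ^+ 2 = 0.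
  by case: p => // _; rewrite (hnorm0 hip) expr0n.
rewrite /l2 -(is_cvgn_shiftn _ 1).
rewrite -(series_shiftn (u := fun m => hnorm ip (A m (x m)) ^+ 2) _ Wx0); last first.
  by move=> m; rewrite addn1.
have le_Ax m : hnorm ip (A m (x m)) ^+ 2 <= M ^+ 2 * hnorm ip (x m) ^+ 2.
  have := hM m (x m); have := sqrtr_ge0 (complex.Re (ip (A m (x m)) (A m (x m)))).
  have := sqrtr_ge0 (complex.Re (ip (x m) (x m))); rewrite /hnorm; nra.
have rhs_ge0 m : 0 <= M ^+ 2 * hnorm ip (x m) ^+ 2 by rewrite mulr_ge0 ?sqr_ge0.
apply: (series_le_cvg (fun m => sqr_ge0 _) rhs_ge0 le_Ax).
by have := is_cvg_seriesZ (k := M ^+ 2) hx; rewrite scalrfctE.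
Qed.

Lemma l2_iter_wshift i x : l2 ip x -> l2 ip (iter i W x).
Proof. by elim: i => //= i IH /IH; exact: l2_wshift. Qed.

Lemma l2ip_iter_adjoint S : l2_adjoint ip W S ->
  forall j u v, l2 ip u -> l2 ip v -> l2ip ip (iter j S u) v = l2ip ip u (iter j W v).
Proof.
move=> [l2S adjS]; elim=> [|j IH] u v hu hv //=.
have hSj : l2 ip (iter j S u) by elim: (j) => //= ? /l2S.
rewrite (l2ipC hip hv (l2S _ hSj)) -(adjS _ _ hv hSj).
rewrite (l2ipC hip hSj (l2_wshift hv)) conjcK IH //; last exact: l2_wshift.
by rewrite -iterSr.
Qed.

Lemma l2ip_iter_wshift s x y : l2 ip x -> l2 ip y ->
  let F n := ip (wprod n s (x n)) (wprod n s (y n)) in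
  csummable F /\ l2ip ip (iter s W x) (iter s W y) = csum F.
Proof.
move=> hx hy F.
have Ft m : F m = ip (iter s W x (m + s)%N) (iter s W y (m + s)%N).
  by rewrite !iter_wshift leq_addl addnK.
have t0 p : (p < s)%N -> ip (iter s W x p) (iter s W y p) = 0.
  by move=> ps; rewrite iter_wshift leqNgt ps (ip0l hip).
have ct := csummable_ip hip (l2_iter_wshift (i := s) hx) (l2_iter_wshift (i := s) hy).
by split; [exact/(csummable_shiftn Ft t0) | rewrite l2ipE (csum_shiftn Ft t0)].
Qed.

Lemma l2ip_iter_wshift_offset o i j x y : (i + j <= o)%N -> l2 ip x -> l2 ip y ->
  let G p := if (o <= p + i)%N && (o <= p + j)%N
             then ip (wprod (p + j - o) i (x (p + j - o)%N))
                     (wprod (p + i - o) j (y (p + i - o)%N))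
             else 0 in
  csummable G /\ l2ip ip (iter i W x) (iter j W y) = csum G.
Proof.
move=> ijo hx hy G.
have tG m : ip (iter i W x m) (iter j W y m) = G (m + (o - (i + j)))%N.
  rewrite !iter_wshift /G.
  have -> : (o <= m + (o - (i + j)) + i)%N = (j <= m)%N by apply/idP/idP => ?; lia.
  have -> : (o <= m + (o - (i + j)) + j)%N = (i <= m)%N by apply/idP/idP => ?; lia.
  have -> : (m + (o - (i + j)) + j - o = m - i)%N by lia.
  have -> : (m + (o - (i + j)) + i - o = m - j)%N by lia.
  by case: (leqP j m); case: (leqP i m); rewrite /= ?(ip0l hip) ?(ip0r hip).
have G0 p : (p < o - (i + j))%N -> G p = 0.
  by move=> po; rewrite /G ifF //; apply/negbTE; rewrite negb_and -!ltnNge; lia.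
have ct := csummable_ip hip (l2_iter_wshift (i := i) hx) (l2_iter_wshift (i := j) hy).
by split; [exact/(csummable_shiftn tG G0) | rewrite l2ipE (csum_shiftn tG G0)].
Qed.

End WeightedShift.

Lemma sum_cutoff (V : nmodType) (k r : nat) (f : nat -> V) :
  (forall i, (k < i)%N -> f i = 0) ->
  \sum_(i < k.+1) (if (r <= i)%N then f i else 0) = \sum_(i < k.+1) f (i + r)%N.
Proof.
move=> f0; rewrite -big_mkcond -(big_mkord xpredT (fun i => f (i + r)%N)).
rewrite -(big_geq_mkord _ _ xpredT) (big_nat_widen _ _ _ _ _ (leq_addr r k.+1)).
rewrite -[in LHS](add0n r) big_addn addnK big_mkcond.
by apply: eq_big_nat => i _ /=; case: ltnP => // /f0 ->.
Qed.

Section Forms.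
Variables (R : realType) (H : lmodType R[i]) (ip : H -> H -> R[i]).
Variables (A : nat -> {linear H -> H}) (k : nat).
Hypothesis hip : is_inner_product ip.
Local Notation wprod := (wprod A).

Definition embry_form (n : nat) (e : nat -> H) : R[i] :=
  \sum_(i < k.+1) \sum_(j < k.+1) ip (wprod n (i + j) (e j)) (wprod n (i + j) (e i)).

(* The part of the k-hyponormality form of the shift at the integer level p - o:
   entry (i, j) is <(W^i x_j)_m, (W^j x_i)_m> at m = p + i + j - o, where
   c_j = x_j(p + j - o); the offset o lets the level be negative. *)
Definition hypo_form (o p : nat) (c : nat -> H) : R[i] :=
  \sum_(i < k.+1) \sum_(j < k.+1)
    if (o <= p + i)%N && (o <= p + j)%N
    then ip (wprod (p + j - o) i (c j)) (wprod (p + i - o) j (c i)) else 0.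

Lemma hypo_form_wprod n e : hypo_form 0 n (fun j => wprod n j (e j)) = embry_form n e.
Proof.
by apply: eq_bigr => i _; apply: eq_bigr => j _; rewrite !subn0 !wprodD (addnC j).
Qed.

Lemma embry_form_cutoff n r (d : nat -> H) : (forall j, (k < j)%N -> d j = 0) ->
  \sum_(i < k.+1) \sum_(j < k.+1)
     (if (r <= i)%N && (r <= j)%N
      then ip (wprod n (i + j - r) (d j)) (wprod n (i + j - r) (d i)) else 0) =
  embry_form (n + r) (fun j => wprod n r (d (j + r)%N)).
Proof.
move=> d0; pose g i j := ip (wprod n (i + j - r) (d j)) (wprod n (i + j - r) (d i)).
have gl0 i j : (k < i)%N -> g i j = 0.
  by move/d0; rewrite /g => ->; rewrite wprod0 (ip0r hip).
have gr0 i j : (k < j)%N -> g i j = 0.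
  by move/d0; rewrite /g => ->; rewrite wprod0 (ip0l hip).
pose h i := \sum_(j < k.+1) if (r <= j)%N then g i j else 0.
transitivity (\sum_(i < k.+1) if (r <= i)%N then h i else 0).
  by apply: eq_bigr => i _; case: (boolP (r <= i)%N) => //= _; rewrite ?big1.
rewrite (@sum_cutoff _ _ _ h); last first.
  by move=> i ki; rewrite /h big1 // => j _; rewrite gl0 //; case: ifP.
apply: eq_bigr => i _; rewrite /h (@sum_cutoff _ _ _ (g (i + r)%N)); last exact: gr0.
apply: eq_bigr => j _; rewrite /g !wprodD.
by have -> : (i + r + (j + r) - r = r + (i + j))%N by lia.
Qed.

Lemma hypo_form_ge0 :
  (forall n i z, exists y, wprod n i y = z) -> (forall n e, 0 <= embry_form n e) ->
  forall o p c, 0 <= hypo_form o p c.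
Proof.
move=> surj embry_ge0 o p c.
set n := (p - o)%N; set r := (o - p)%N.
have [d dP] := boolp.choice (fun j => surj n (j - r)%N (c j)).
pose d' j := if (j <= k)%N then d j else 0.
have shiftE (l m : 'I_k.+1) :
    (r <= l)%N -> wprod (p + l - o) m (c l) = wprod n (m + l - r) (d' l).
  move=> rl; rewrite /d' -ltnS ltn_ord -(dP l).
  have -> : (p + l - o = n + (l - r))%N by lia.
  by rewrite wprodD; congr wprod; lia.
suff -> : hypo_form o p c = \sum_(i < k.+1) \sum_(j < k.+1)
    (if (r <= i)%N && (r <= j)%N
     then ip (wprod n (i + j - r) (d' j)) (wprod n (i + j - r) (d' i)) else 0).
  by rewrite embry_form_cutoff => [|j kj]; [exact: embry_ge0 | rewrite /d' leqNgt kj].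
apply: eq_bigr => i _; apply: eq_bigr => j _.
have level l : (o <= p + l)%N = (r <= l)%N by apply/idP/idP => ?; lia.
rewrite !level; case: (boolP (r <= i)%N) => ri; case: (boolP (r <= j)%N) => rj //=.
by rewrite !shiftE // (addnC j i).
Qed.

End Forms.

Section Main.
Variables (R : realType) (H : lmodType R[i]) (ip : H -> H -> R[i]).
Variables (A : nat -> {linear H -> H}) (k : nat) (M : R).
Hypothesis hip : is_inner_product ip.
Hypothesis hM : forall n x, hnorm ip (A n x) <= M * hnorm ip x.
Variable S : (nat -> H) -> nat -> H.
Hypothesis hS : l2_adjoint ip (wshift (fun n => A n)) S.
Local Notation W := (wshift (fun n => A n)).

Lemma hypo_form_ge0_of_k_hyponormal :
  k_hyponormal ip k W -> forall n c, 0 <= hypo_form ip A k 0 n c.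
Proof.
move=> hyp n c; pose x (j : 'I_k.+1) := hdelta (n + j) (c j).
have hx j : l2 ip (x j) by exact: l2_hdelta.
suff -> : hypo_form ip A k 0 n c =
    \sum_(i < k.+1) \sum_(j < k.+1) l2ip ip (iter j S (iter i W (x j))) (x i).
  exact: hyp S hS x hx.
apply: eq_bigr => i _; apply: eq_bigr => j _.
rewrite (l2ip_iter_adjoint hip hM hS _ (l2_iter_wshift hip hM (hx j)) (hx i)).
by rewrite !iter_wshift_hdelta (addnAC n j i) (l2ip_hdelta hip) !subn0.
Qed.

Lemma embry_form_ge0_of_kE_hyponormal :
  kE_hyponormal ip k W -> forall n e, 0 <= embry_form ip A k n e.
Proof.
move=> hyp n e; pose x (j : 'I_k.+1) := hdelta n (e j).
have hx j : l2 ip (x j) by exact: l2_hdelta.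
suff -> : embry_form ip A k n e = \sum_(i < k.+1) \sum_(j < k.+1)
    l2ip ip (iter (i + j) S (iter (i + j) W (x j))) (x i).
  exact: hyp S hS x hx.
apply: eq_bigr => i _; apply: eq_bigr => j _.
rewrite (l2ip_iter_adjoint hip hM hS _ (l2_iter_wshift hip hM (hx j)) (hx i)).
by rewrite !iter_wshift_hdelta (l2ip_hdelta hip).
Qed.

Lemma embry_matrix_pos : (forall n e, 0 <= embry_form ip A k n e) ->
  @op_matrix_pos _ _ ip k (fun i j x => iter (i + j) S (iter (i + j) W x)).
Proof.
move=> embry_ge0 x hx.
have term (i j : 'I_k.+1) := l2ip_iter_wshift hip hM (i + j) (hx j) (hx i).
under eq_bigr do under eq_bigr do
  rewrite (l2ip_iter_adjoint hip hM hS _ (l2_iter_wshift hip hM (hx _)) (hx _)) (term _ _).2.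
apply: csum_double_ge0 => [i j|n]; first exact: (term i j).1.
rewrite [X in 0 <= X](_ : _ = embry_form ip A k n (fun j => x (inord j) n)) //.
by apply: eq_bigr => i _; apply: eq_bigr => j _; rewrite !inord_val.
Qed.

Lemma hypo_matrix_pos : (forall p c, 0 <= hypo_form ip A k (2 * k) p c) ->
  @op_matrix_pos _ _ ip k (fun i j x => iter j S (iter i W x)).
Proof.
move=> hypo_ge0 x hx.
have ijk (i j : 'I_k.+1) : (i + j <= 2 * k)%N by have := ltn_ord i; have := ltn_ord j; lia.
have term (i j : 'I_k.+1) := l2ip_iter_wshift_offset hip hM (ijk i j) (hx j) (hx i).
under eq_bigr do under eq_bigr do
  rewrite (l2ip_iter_adjoint hip hM hS _ (l2_iter_wshift hip hM (hx _)) (hx _)) (term _ _).2.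
apply: csum_double_ge0 => [i j|p]; first exact: (term i j).1.
pose c l := x (inord l) (p + l - 2 * k)%N.
rewrite [X in 0 <= X](_ : _ = hypo_form ip A k (2 * k) p c) //.
by apply: eq_bigr => i _; apply: eq_bigr => j _; rewrite /c !inord_val.
Qed.

End Main.

Theorem mainTheorem1 (R : realType) (H : lmodType R[i]) (ip : H -> H -> R[i])
  (hH : complex_separable_hilbert ip)
  (A : nat -> {linear H -> H})
  (hA : forall n, [/\ bounded_op ip (A n), positive_op ip (A n)
                    & invertible_op ip (A n)])
  (hsup : exists M : R, forall n x, hnorm ip (A n x) <= M * hnorm ip x)
  (k : nat) (hk : (1 <= k)%N) :
  k_hyponormal ip k (wshift (fun n => A n)) <->
  kE_hyponormal ip k (wshift (fun n => A n)).
Proof.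
have [hip _ _] := hH; have [M hM] := hsup.
have surjA n z : exists y, A n y = z.
  by have [_ _ [B [_ [_ BK]]]] := hA n; exists (B z); rewrite BK.
split=> [hyp | hypE] S hS.
- apply: (embry_matrix_pos hip hM hS) => n e.
  rewrite -hypo_form_wprod; exact: (hypo_form_ge0_of_k_hyponormal hip hM hS hyp).
- apply: (hypo_matrix_pos hip hM hS) => p c.
  apply: (hypo_form_ge0 hip (wprod_surj surjA)).
  exact: (embry_form_ge0_of_kE_hyponormal hip hM hS hypE).
Qed.
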